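(* For every integer $r\ge 1$ and every $\xi\in\mathbb{R}$, \[ \lim_{n\to\infty}\frac{1}{n}\log \mathbb{E}\left[\exp(\xi S_{r+1,n})\right]=\varphi^{r}(\xi), \] where $\varphi^r=\varphi\circ\cdots\circ\varphi$ denotes the $r$-fold composition of $\varphi(\xi)=\frac{\xi}{4}+\log\cosh\frac{\xi}{4}$, and $\mathbb{E}$ is expectation under the uniform probability measure on $\Omega_n$.
   Context: Let $\Omega_n$ be the set of rooted, planar, full binary trees with $n$ leaves (every node has $0$ or $2$ children, and the two children of each node are distinguished as left and right); $|\Omega_n|=\frac{(2n-2)!}{n!(n-1)!}$. The random binary tree model is $\Omega_n$ with the uniform probability measure. Strahler ordering: leaves have order 1; an internal node whose two children have different orders $r_1\neq r_2$ has order $\max\{r_1,r_2\}$; an internal node whose two children both have order $r$ has order $r+1$. A branch of order $r$ is a maximal connected path all of whose nodes have order $r$. For $\tau\in\Omega_n$, $S_{r,n}(\tau)$ is the number of branches of order $r$ in $\tau$; it is a random variable on the random model. *)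

From Stdlib Require Import Reals Arith List.
Import ListNotations.
Open Scope R_scope.

Inductive tree : Type :=
| Leaf : tree
| Node : tree -> tree -> tree.

Fixpoint leaves (t : tree) : nat :=
  match t with
  | Leaf => 1
  | Node a b => leaves a + leaves b
  end.

(** Generator with fuel: all trees with exactly n leaves (fuel >= n suffices). *)
Fixpoint gen_trees (fuel n : nat) : list tree :=
  match fuel with
  | O => []
  | S f =>
      if Nat.eqb n 1 then [Leaf]
      else flat_map (fun k =>
             flat_map (fun a => map (fun b => Node a b) (gen_trees f (n - k)))
                      (gen_trees f k))
           (seq 1 (n - 1))
  end.

Definition Omega (n : nat) : list tree := gen_trees n n.

Fixpoint strahler (t : tree) : nat :=
  match t with
  | Leaf => 1
  | Node a b =>
      let ra := strahler a in
      let rb := strahler b in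
      if Nat.eqb ra rb then S ra else Nat.max ra rb
  end.

Definition ind (b : bool) : nat := if b then 1%nat else 0%nat.

(** Number of non-root nodes of order r in t whose parent has order <> r,
    i.e. tops of order-r branches that are not the root of t. *)
Fixpoint inner_tops (r : nat) (t : tree) : nat :=
  match t with
  | Leaf => 0
  | Node a b =>
      let p := strahler t in
      inner_tops r a + inner_tops r b
      + ind (Nat.eqb (strahler a) r && negb (Nat.eqb p r))
      + ind (Nat.eqb (strahler b) r && negb (Nat.eqb p r))
  end.

(** Order-r nodes form vertical
    chains (a node of order r has at most one child of order r), and each
    maximal chain (branch) has a unique top node: an order-r node that is
    the root or whose parent has order different from r. *)
Definition branches (r : nat) (t : tree) : nat :=
  inner_tops r t + ind (Nat.eqb (strahler t) r).

Definition expect_exp (xi : R) (r n : nat) : R :=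
  fold_right Rplus 0 (map (fun t => exp (xi * INR (branches r t))) (Omega n))
  / INR (length (Omega n)).

Definition phi (x : R) : R := x / 4 + ln (cosh (x / 4)).

Example omega_sizes :
  map (fun n => length (Omega n)) [1;2;3;4;5]%nat = [1;1;2;5;14]%nat.
Proof. reflexivity. Qed.

Example omega_leaves : forallb (fun t => Nat.eqb (leaves t) 5) (Omega 5) = true.
Proof. reflexivity. Qed.

Example branches_ex :
  let t := Node (Node Leaf Leaf) (Node (Node Leaf Leaf) Leaf) in
  (branches 1 t, branches 2 t, branches 3 t) = (5%nat, 2%nat, 1%nat).
Proof. reflexivity. Qed.

(* Pruning a tree (deleting its leaves, then contracting the nodes left with a single child)
   lowers every Strahler order by one, so S_{r+1}(t) = S_r(prune t).  The number of trees
   with n leaves that prune to a given tree with m leaves depends only on its 2m - 1 nodes: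
   it is the coefficient c(n, m) of x^(n-1) in (x / (1 - 2x))^(2m-1).  Hence the sums
   Z_r(n) = sum_{t in Omega_n} exp(xi S_{r+1}(t)) satisfy Z_{r+1}(n) = sum_m c(n, m) Z_r(m),
   and since sum_m c(n, m) exp(m h) lies within constant factors of (2 + exp(h/2))^n, an
   exponential growth rate g of Z_r becomes the rate F(g) = ln(2 + exp(g/2)) of Z_{r+1}.
   Starting from Z_0(n) = |Omega_n| exp(n xi) of rate xi + ln 4 and using
   F(x + ln 4) = phi(x) + ln 4, the rate of Z_r is phi^r(xi) + ln 4; dividing by |Omega_n|
   removes the ln 4.  The rate ln 4 of |Omega_n| follows from |Omega_n| <= 4^n and, from
   below, from the same recursion: the iterates of F from 0 converge to its fixed point ln 4. *)

From Stdlib Require Import Reals Arith List Lia Lra Permutation.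
Import ListNotations.
Open Scope R_scope.

Lemma NoDup_flat_map {A B : Type} (f : A -> list B) (l : list A) :
  NoDup l -> (forall x, In x l -> NoDup (f x)) ->
  (forall x y z, In x l -> In y l -> In z (f x) -> In z (f y) -> x = y) ->
  NoDup (flat_map f l).
Proof.
  induction l as [|a l IH]; simpl; intros Hl Hf Hdisj; [constructor|].
  inversion Hl as [|? ? Ha Hl']; subst.
  apply NoDup_app; auto.
  - apply IH; auto. intros x y z Hx Hy. apply Hdisj; auto.
  - intros z Hz Hz'. apply in_flat_map in Hz' as [y [Hy Hzy]].
    assert (a = y) by (apply (Hdisj a y z); auto). subst. contradiction.
Qed.

Definition sumR {A : Type} (l : list A) (g : A -> R) : R := fold_right Rplus 0 (map g l).

Section ListSums.
Context {A : Type}.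
Implicit Types (l : list A) (g h : A -> R).

Lemma sumR_app l1 l2 g : sumR (l1 ++ l2) g = sumR l1 g + sumR l2 g.
Proof. unfold sumR; induction l1; simpl; [lra | rewrite IHl1; lra]. Qed.

Lemma sumR_perm l1 l2 g : Permutation l1 l2 -> sumR l1 g = sumR l2 g.
Proof. unfold sumR; induction 1; simpl; lra. Qed.

Lemma sumR_ext_in l g h : (forall x, In x l -> g x = h x) -> sumR l g = sumR l h.
Proof. unfold sumR; induction l; simpl; intros H; [reflexivity|]. rewrite H, IHl; auto. Qed.

Lemma sumR_const l c : sumR l (fun _ => c) = INR (length l) * c.
Proof. unfold sumR; induction l; simpl length; [simpl; lra|]. rewrite S_INR. simpl. lra. Qed.

Lemma sumR_scal l c g : sumR l (fun x => c * g x) = c * sumR l g.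
Proof. unfold sumR; induction l; simpl; [lra | rewrite IHl; lra]. Qed.

Lemma sumR_plus l g h : sumR l (fun x => g x + h x) = sumR l g + sumR l h.
Proof. unfold sumR; induction l; simpl; [lra | rewrite IHl; lra]. Qed.

Lemma sumR_le l g h : (forall x, In x l -> g x <= h x) -> sumR l g <= sumR l h.
Proof. unfold sumR; induction l; simpl; intros H; [lra|]. apply Rplus_le_compat; auto. Qed.

Lemma sumR_nonneg l g : (forall x, In x l -> 0 <= g x) -> 0 <= sumR l g.
Proof. intros H. rewrite <- (Rmult_0_r (INR (length l))), <- sumR_const. now apply sumR_le. Qed.

Lemma sumR_pos l g : l <> [] -> (forall x, In x l -> 0 < g x) -> 0 < sumR l g.
Proof.
  destruct l as [|a l]; intros Hl H; [congruence|]. unfold sumR; simpl.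
  pose proof (H a (or_introl eq_refl)).
  enough (0 <= sumR l g) by (unfold sumR in *; lra).
  apply sumR_nonneg. intros x Hx. left. apply H. now right.
Qed.

End ListSums.

Lemma sumR_flat_map {A B : Type} (f : A -> list B) l (g : B -> R) :
  sumR (flat_map f l) g = sumR l (fun x => sumR (f x) g).
Proof. induction l; simpl; [reflexivity|]. rewrite sumR_app, IHl. reflexivity. Qed.

Lemma sumR_map {A B : Type} (f : A -> B) (l : list A) (g : B -> R) :
  sumR (map f l) g = sumR l (fun x => g (f x)).
Proof. unfold sumR. now rewrite map_map. Qed.

Lemma sumR_seq_last n (g : nat -> R) : sumR (seq 0 (S n)) g = sumR (seq 0 n) g + g n.
Proof. rewrite seq_S, sumR_app. unfold sumR at 2. simpl. ring. Qed.

Lemma sumR_seq_first n (g : nat -> R) :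
  sumR (seq 0 (S n)) g = g 0%nat + sumR (seq 0 n) (fun m => g (S m)).
Proof. rewrite <- cons_seq, <- seq_shift. unfold sumR; simpl. now rewrite map_map. Qed.

(** * Enumeration of trees *)

Lemma leaves_pos t : (1 <= leaves t)%nat.
Proof. induction t; simpl; lia. Qed.

Definition node_joins (E1 E2 : nat -> list tree) (n : nat) : list tree :=
  flat_map (fun k => flat_map (fun a => map (Node a) (E2 (n - k)%nat)) (E1 k)) (seq 1 (n - 1)).

Lemma In_node_joins E1 E2 n t : In t (node_joins E1 E2 n) <->
  exists k a b, (1 <= k < n)%nat /\ In a (E1 k) /\ In b (E2 (n - k)%nat) /\ t = Node a b.
Proof.
  unfold node_joins. rewrite in_flat_map. split.
  - intros [k [Hk Ht]]. apply in_seq in Hk. apply in_flat_map in Ht as [a [Ha Ht]].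
    apply in_map_iff in Ht as [b [<- Hb]]. exists k, a, b. repeat split; auto; lia.
  - intros (k & a & b & Hk & Ha & Hb & ->). exists k. split; [apply in_seq; lia|].
    apply in_flat_map. exists a. split; [exact Ha | now apply in_map].
Qed.

Lemma node_joins_nodup E1 E2 n : (forall k, NoDup (E1 k)) -> (forall k, NoDup (E2 k)) ->
  (forall k a, In a (E1 k) -> leaves a = k) -> NoDup (node_joins E1 E2 n).
Proof.
  intros H1 H2 Hl. apply NoDup_flat_map; [apply seq_NoDup | |].
  - intros k _. apply NoDup_flat_map; auto.
    + intros a _. apply FinFun.Injective_map_NoDup; [|auto]. intros b b' E. now inversion E.
    + intros a a' z _ _ Ha Ha'. apply in_map_iff in Ha as [b [<- _]].
      apply in_map_iff in Ha' as [b' [E _]]. now inversion E.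
  - intros k k' z _ _ Hk Hk'.
    apply in_flat_map in Hk as [a [Ha Hk]]. apply in_map_iff in Hk as [b [<- _]].
    apply in_flat_map in Hk' as [a' [Ha' Hk']]. apply in_map_iff in Hk' as [b' [E _]].
    inversion E; subst. now rewrite <- (Hl _ _ Ha), <- (Hl _ _ Ha').
Qed.

Lemma gen_trees_S fuel n : gen_trees (S fuel) n =
  if (n =? 1)%nat then [Leaf] else node_joins (gen_trees fuel) (gen_trees fuel) n.
Proof. reflexivity. Qed.

Lemma gen_trees_sound fuel n t : In t (gen_trees fuel n) -> leaves t = n.
Proof.
  revert n t; induction fuel as [|f IH]; intros n t; [intros []|].
  rewrite gen_trees_S. destruct (Nat.eqb_spec n 1) as [->|_]; [intros [<-|[]]; reflexivity|].
  rewrite In_node_joins. intros (k & a & b & Hk & Ha & Hb & ->).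
  apply IH in Ha, Hb. simpl. lia.
Qed.

Lemma gen_trees_complete fuel t : (leaves t <= fuel)%nat -> In t (gen_trees fuel (leaves t)).
Proof.
  revert t; induction fuel as [|f IH]; intros t Hf; [pose proof (leaves_pos t); lia|].
  rewrite gen_trees_S. destruct t as [|a b]; [now left|].
  simpl in Hf |- *. pose proof (leaves_pos a); pose proof (leaves_pos b).
  destruct (Nat.eqb_spec (leaves a + leaves b) 1); [lia|].
  apply In_node_joins. exists (leaves a), a, b.
  replace (leaves a + leaves b - leaves a)%nat with (leaves b) by lia.
  repeat split; auto; try lia; apply IH; lia.
Qed.

Lemma gen_trees_nodup fuel n : NoDup (gen_trees fuel n).
Proof.
  revert n; induction fuel as [|f IH]; intros n; [constructor|].
  rewrite gen_trees_S. destruct (n =? 1)%nat; [repeat constructor; auto|].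
  apply node_joins_nodup; auto. intros k a. apply gen_trees_sound.
Qed.

Lemma In_Omega n t : In t (Omega n) <-> leaves t = n.
Proof.
  split; [apply gen_trees_sound|]. intros <-. now apply gen_trees_complete.
Qed.

Lemma Omega_nodup n : NoDup (Omega n).
Proof. apply gen_trees_nodup. Qed.

Lemma Omega_nonempty n : (1 <= n)%nat -> Omega n <> [].
Proof.
  intros Hn.
  assert (Ht : exists t, leaves t = n).
  { induction n as [|[|n] IH]; [lia | now exists Leaf |].
    destruct IH as [t Ht]; [lia|]. exists (Node Leaf t). simpl. lia. }
  destruct Ht as [t Ht]. apply In_Omega in Ht. intros E. now rewrite E in Ht.
Qed.

Fixpoint encode (t : tree) : list bool :=
  match t with
  | Leaf => [false]
  | Node a b => true :: encode a ++ encode b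
  end.

Lemma encode_app_inj t t' s s' : encode t ++ s = encode t' ++ s' -> t = t' /\ s = s'.
Proof.
  revert t' s s'.
  induction t as [|a IHa b IHb]; intros [|a' b'] s s' E; simpl in E; inversion E as [E'];
    auto.
  rewrite <- !app_assoc in E'.
  apply IHa in E' as [-> E']. apply IHb in E' as [-> ->]. auto.
Qed.

Lemma encode_inj : FinFun.Injective encode.
Proof. intros t t' E. apply (encode_app_inj t t' [] []). now rewrite !app_nil_r. Qed.

Lemma length_encode t : length (encode t) = (2 * leaves t - 1)%nat.
Proof.
  induction t as [|a IHa b IHb]; simpl; [reflexivity|].
  rewrite length_app, IHa, IHb. pose proof (leaves_pos a); pose proof (leaves_pos b). lia.
Qed.

Fixpoint bool_lists (k : nat) : list (list bool) :=
  match k with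
  | O => [[]]
  | S k => flat_map (fun l => [true :: l; false :: l]) (bool_lists k)
  end.

Lemma length_bool_lists k : length (bool_lists k) = (2 ^ k)%nat.
Proof.
  induction k as [|k IH]; simpl; [reflexivity|].
  rewrite length_flat_map, <- IH; clear IH. induction (bool_lists k); simpl in *; lia.
Qed.

Lemma In_bool_lists l : In l (bool_lists (length l)).
Proof.
  induction l as [|x l IH]; simpl; [now left|].
  apply in_flat_map. exists l. split; [exact IH|]. destruct x; simpl; auto.
Qed.

Lemma length_Omega_le n : (length (Omega n) <= 4 ^ n)%nat.
Proof.
  rewrite <- (length_map encode).
  apply Nat.le_trans with (length (bool_lists (2 * n - 1))).
  - apply NoDup_incl_length.
    + apply FinFun.Injective_map_NoDup; [apply encode_inj | apply Omega_nodup].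
    + intros l Hl. apply in_map_iff in Hl as [t [<- Ht]]. apply In_Omega in Ht.
      rewrite <- Ht, <- length_encode. apply In_bool_lists.
  - rewrite length_bool_lists. change 4%nat with (2 ^ 2)%nat. rewrite <- Nat.pow_mul_r.
    apply Nat.pow_le_mono_r; lia.
Qed.

(** * Pruning *)

Fixpoint prune (t : tree) : tree :=
  match t with
  | Leaf => Leaf
  | Node a b =>
      match a, b with
      | Leaf, Leaf => Leaf
      | Leaf, _ => prune b
      | _, Leaf => prune a
      | _, _ => Node (prune a) (prune b)
      end
  end.

Lemma tree_eq_Leaf t : {t = Leaf} + {t <> Leaf}.
Proof. destruct t; [left | right]; congruence. Qed.

Lemma strahler_pos t : (1 <= strahler t)%nat.
Proof.
  induction t as [|a IHa b IHb]; simpl; [lia|].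
  destruct (Nat.eqb_spec (strahler a) (strahler b)); lia.
Qed.

Lemma strahler_Node a b : (2 <= strahler (Node a b))%nat.
Proof.
  simpl. pose proof (strahler_pos a); pose proof (strahler_pos b).
  destruct (Nat.eqb_spec (strahler a) (strahler b)); lia.
Qed.

Lemma strahler_nonleaf t : t <> Leaf -> (2 <= strahler t)%nat.
Proof. destruct t; [congruence | intros _; apply strahler_Node]. Qed.

Lemma strahler_Leaf_l b : b <> Leaf -> strahler (Node Leaf b) = strahler b.
Proof.
  intros Hb. pose proof (strahler_nonleaf b Hb). cbn [strahler].
  destruct (Nat.eqb_spec 1 (strahler b)); lia.
Qed.

Lemma strahler_Leaf_r a : a <> Leaf -> strahler (Node a Leaf) = strahler a.
Proof.
  intros Ha. pose proof (strahler_nonleaf a Ha). cbn [strahler].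
  destruct (Nat.eqb_spec (strahler a) 1); lia.
Qed.

Lemma prune_Leaf_l b : b <> Leaf -> prune (Node Leaf b) = prune b.
Proof. destruct b; [congruence | reflexivity]. Qed.

Lemma prune_Leaf_r a : a <> Leaf -> prune (Node a Leaf) = prune a.
Proof. destruct a; [congruence | reflexivity]. Qed.

Lemma prune_Node a b : a <> Leaf -> b <> Leaf -> prune (Node a b) = Node (prune a) (prune b).
Proof. destruct a, b; try congruence; reflexivity. Qed.

Lemma nonleaf_ind (P : tree -> Prop) :
  P (Node Leaf Leaf) ->
  (forall b, b <> Leaf -> P b -> P (Node Leaf b)) ->
  (forall a, a <> Leaf -> P a -> P (Node a Leaf)) ->
  (forall a b, a <> Leaf -> b <> Leaf -> P a -> P b -> P (Node a b)) ->
  forall t, t <> Leaf -> P t.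
Proof.
  intros H0 Hl Hr Hn t. induction t as [|a IHa b IHb]; intros Ht; [congruence|].
  destruct (tree_eq_Leaf a) as [->|Ha], (tree_eq_Leaf b) as [->|Hb]; auto.
Qed.

Lemma strahler_prune t : t <> Leaf -> strahler (prune t) = (strahler t - 1)%nat.
Proof.
  revert t.
  apply nonleaf_ind; [reflexivity | intros b Hb IH | intros a Ha IH | intros a b Ha Hb IHa IHb].
  - now rewrite prune_Leaf_l, strahler_Leaf_l.
  - now rewrite prune_Leaf_r, strahler_Leaf_r.
  - pose proof (strahler_nonleaf a Ha); pose proof (strahler_nonleaf b Hb).
    rewrite prune_Node by auto. cbn [strahler]. rewrite IHa, IHb.
    destruct (Nat.eqb_spec (strahler a) (strahler b));
      destruct (Nat.eqb_spec (strahler a - 1) (strahler b - 1)); lia.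
Qed.

Lemma eqb_pred_S x r : (1 <= x)%nat -> (x =? S r)%nat = (x - 1 =? r)%nat.
Proof. intros Hx. destruct (Nat.eqb_spec x (S r)), (Nat.eqb_spec (x - 1) r); auto; lia. Qed.

Lemma inner_tops_prune r t : (1 <= r)%nat -> t <> Leaf ->
  inner_tops (S r) t = inner_tops r (prune t).
Proof.
  intros Hr. destruct r as [|r]; [lia|]. revert t.
  apply nonleaf_ind; [reflexivity | intros b Hb IH | intros a Ha IH | intros a b Ha Hb IHa IHb].
  - rewrite prune_Leaf_l, <- IH by auto. cbn [inner_tops]. rewrite strahler_Leaf_l by auto.
    destruct (strahler b =? S (S r))%nat; simpl; lia.
  - rewrite prune_Leaf_r, <- IH by auto. cbn [inner_tops]. rewrite strahler_Leaf_r by auto.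
    destruct (strahler a =? S (S r))%nat; simpl; lia.
  - assert (Hab : Node a b <> Leaf) by congruence.
    pose proof (strahler_prune _ Hab) as Eab. rewrite prune_Node in Eab by auto.
    rewrite prune_Node by auto. cbn [inner_tops]. rewrite <- IHa, <- IHb, Eab.
    rewrite !strahler_prune by auto.
    pose proof (strahler_nonleaf a Ha); pose proof (strahler_nonleaf b Hb);
      pose proof (strahler_Node a b).
    rewrite !(eqb_pred_S _ (S r)) by lia. reflexivity.
Qed.

Lemma branches_prune r t : (1 <= r)%nat -> t <> Leaf ->
  branches (S r) t = branches r (prune t).
Proof.
  intros Hr Ht. unfold branches.
  rewrite inner_tops_prune, strahler_prune, eqb_pred_S by (auto using strahler_pos).
  reflexivity.
Qed.

Lemma branches_1 t : branches 1 t = leaves t.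
Proof.
  unfold branches. induction t as [|a IHa b IHb]; [reflexivity|].
  pose proof (strahler_Node a b).
  cbn [inner_tops leaves].
  replace (strahler (Node a b) =? 1)%nat with false by (symmetry; apply Nat.eqb_neq; lia).
  destruct (strahler a =? 1)%nat, (strahler b =? 1)%nat; simpl in *; lia.
Qed.

(** * Fibers of pruning *)

(* [stem_coef N k] is the coefficient of x^N in (x / (1 - 2x))^k. *)
Fixpoint stem_coef (N k : nat) : nat :=
  match N, k with
  | O, O => 1
  | O, S _ => 0
  | S _, O => 0
  | S N', S k' => stem_coef N' k' + 2 * stem_coef N' (S k')
  end.

Definition fiber_count (n k : nat) : nat :=
  match n with O => O | S N => stem_coef N k end.

Lemma stem_coef_0 N : stem_coef N 0 = if (N =? 0)%nat then 1%nat else 0%nat.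
Proof. now destruct N. Qed.

Lemma stem_coef_gt N k : (N < k)%nat -> stem_coef N k = 0%nat.
Proof.
  revert k; induction N as [|N IH]; intros [|k] Hk; simpl; try lia.
  rewrite !IH by lia. reflexivity.
Qed.

Lemma stem_coef_conv N a b :
  sumR (seq 0 (S N)) (fun j => INR (stem_coef j a) * INR (stem_coef (N - j) b)) =
  INR (stem_coef N (a + b)).
Proof.
  revert a b; induction N as [|N IH]; intros a b.
  - unfold sumR; simpl. destruct a, b; simpl; lra.
  - rewrite sumR_seq_first. destruct a as [|a].
    + rewrite (sumR_ext_in _ _ (fun _ => 0)) by (intros; simpl; lra).
      rewrite sumR_const. simpl. lra.
    + rewrite (sumR_ext_in _ _ (fun j => INR (stem_coef j a) * INR (stem_coef (N - j) b)
                                     + 2 * (INR (stem_coef j (S a)) * INR (stem_coef (N - j) b)))).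
      * rewrite sumR_plus, sumR_scal, !IH. cbn [stem_coef plus].
        rewrite plus_INR, mult_INR, Nat.sub_0_r. rewrite INR_0. simpl (INR 2). lra.
      * intros j _. replace (S N - S j)%nat with (N - j)%nat by lia. cbn [stem_coef].
        rewrite plus_INR, mult_INR. simpl (INR 2). lra.
Qed.

Definition graft_leaf (l : list tree) : list tree :=
  flat_map (fun u => [Node Leaf u; Node u Leaf]) l.

Fixpoint grow (core : nat -> list tree) (n : nat) : list tree :=
  match n with
  | O => []
  | S n' => core (S n') ++ graft_leaf (grow core n')
  end.

Definition cherry_core (n : nat) : list tree :=
  if (n =? 2)%nat then [Node Leaf Leaf] else [].

(* The trees with [n] leaves pruning to [s]: a core (a cherry if [s] is a leaf, a join of
   trees from the fibers of the two subtrees of [s] otherwise) below a stem of nodes, each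
   carrying one extra leaf on either side. *)
Fixpoint fiber (s : tree) : nat -> list tree :=
  match s with
  | Leaf => grow cherry_core
  | Node s1 s2 => grow (node_joins (fiber s1) (fiber s2))
  end.

Definition prunes_to (s : tree) (n : nat) (t : tree) : Prop :=
  t <> Leaf /\ leaves t = n /\ prune t = s.

Lemma grow_sound core s : (forall n t, In t (core n) -> prunes_to s n t) ->
  forall n t, In t (grow core n) -> prunes_to s n t.
Proof.
  intros Hcore n; induction n as [|n IH]; intros t; simpl; [tauto|].
  rewrite in_app_iff. intros [H|H]; [auto|].
  apply in_flat_map in H as [u [Hu H]]. destruct (IH u Hu) as [Hu0 [Hun Hus]].
  destruct H as [<-|[<-|[]]]; (split; [congruence | split; [cbn [leaves]; lia |]]).
  - now rewrite prune_Leaf_l.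
  - now rewrite prune_Leaf_r.
Qed.

Lemma fiber_sound s n t : In t (fiber s n) -> prunes_to s n t.
Proof.
  revert n t; induction s as [|s1 IH1 s2 IH2]; simpl; apply grow_sound; intros n t H.
  - unfold cherry_core in H. destruct (Nat.eqb_spec n 2) as [->|]; [|destruct H].
    destruct H as [<-|[]]. repeat split; congruence.
  - apply In_node_joins in H as (k & a & b & Hk & Ha & Hb & ->).
    destruct (IH1 _ _ Ha) as [Ha0 [Han Has]], (IH2 _ _ Hb) as [Hb0 [Hbn Hbs]].
    repeat split; [congruence | cbn [leaves]; lia |]. rewrite prune_Node by auto. congruence.
Qed.

Lemma fiber_graft s n u : In u (fiber s n) ->
  In (Node Leaf u) (fiber s (S n)) /\ In (Node u Leaf) (fiber s (S n)).
Proof.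
  assert (Hgrow : forall core, In u (grow core n) ->
            In (Node Leaf u) (grow core (S n)) /\ In (Node u Leaf) (grow core (S n))).
  { intros core H. simpl. split; apply in_or_app; right; apply in_flat_map;
      exists u; simpl; auto. }
  destruct s; apply Hgrow.
Qed.

Lemma fiber_complete t s n : prunes_to s n t -> In t (fiber s n).
Proof.
  intros [Ht [Hn Hs]]. subst n s. revert t Ht.
  apply nonleaf_ind; [| intros b Hb IH | intros a Ha IH | intros a b Ha Hb IHa IHb].
  - simpl. now left.
  - rewrite prune_Leaf_l by auto. apply (fiber_graft _ _ _ IH).
  - rewrite prune_Leaf_r by auto. replace (leaves (Node a Leaf)) with (S (leaves a)) by
      (simpl; lia). apply (fiber_graft _ _ _ IH).
  - rewrite prune_Node by auto. pose proof (leaves_pos a); pose proof (leaves_pos b).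
    cbn [fiber leaves]. destruct (leaves a + leaves b)%nat as [|n] eqn:E; [lia|].
    apply in_or_app; left. apply In_node_joins. exists (leaves a), a, b.
    replace (S n - leaves a)%nat with (leaves b) by lia. repeat split; auto; lia.
Qed.

Lemma In_fiber s n t : In t (fiber s n) <-> prunes_to s n t.
Proof. split; [apply fiber_sound | apply fiber_complete]. Qed.

Definition grafted (t : tree) : Prop :=
  exists u, u <> Leaf /\ (t = Node Leaf u \/ t = Node u Leaf).

Lemma graft_leaf_nodup l : NoDup l -> (forall u, In u l -> u <> Leaf) -> NoDup (graft_leaf l).
Proof.
  intros Hl Hu. apply NoDup_flat_map; auto.
  - intros u Hin. pose proof (Hu u Hin).
    constructor; [|repeat constructor; simpl; tauto].
    intros [E|[]]. inversion E; subst; auto.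
  - intros x y z _ _ [<-|[<-|[]]] [E|[E|[]]]; inversion E; subst; auto.
Qed.

Lemma In_graft_leaf l t : (forall u, In u l -> u <> Leaf) -> In t (graft_leaf l) -> grafted t.
Proof.
  intros Hu H. apply in_flat_map in H as [u [Hin H]].
  exists u. split; [auto|]. destruct H as [<-|[<-|[]]]; auto.
Qed.

Lemma grow_nodup core s :
  (forall n, NoDup (core n)) ->
  (forall n t, In t (core n) -> ~ grafted t) ->
  (forall n t, In t (grow core n) -> prunes_to s n t) ->
  forall n, NoDup (grow core n).
Proof.
  intros Hnd Hng Hs n. induction n as [|n IH]; simpl; [constructor|].
  assert (Hu : forall u, In u (grow core n) -> u <> Leaf) by (intros u Hu; apply (Hs n u Hu)).
  apply NoDup_app; auto using graft_leaf_nodup.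
  intros t H1 H2. apply (Hng _ _ H1). exact (In_graft_leaf _ _ Hu H2).
Qed.

Lemma fiber_nodup s n : NoDup (fiber s n).
Proof.
  revert n; induction s as [|s1 IH1 s2 IH2]; intros n.
  - apply grow_nodup with (s := Leaf); [| | apply (fiber_sound Leaf)].
    + intros k. unfold cherry_core. destruct (k =? 2)%nat; repeat constructor; auto.
    + intros k t H [u [Hu E]]. unfold cherry_core in H.
      destruct (k =? 2)%nat; [|destruct H]. destruct H as [<-|[]].
      destruct E as [E|E]; inversion E; congruence.
  - apply grow_nodup with (s := Node s1 s2); [| | apply (fiber_sound (Node s1 s2))].
    + intros k. apply node_joins_nodup; auto.
      intros j a Ha. apply fiber_sound in Ha. apply Ha.
    + intros k t H [u [Hu [E|E]]];
        apply In_node_joins in H as (j & a & b & _ & Ha & Hb & ->); inversion E; subst.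
      * apply fiber_sound in Ha. destruct Ha; congruence.
      * apply fiber_sound in Hb. destruct Hb; congruence.
Qed.

Lemma length_graft_leaf l : length (graft_leaf l) = (2 * length l)%nat.
Proof. induction l as [|u l IH]; simpl; [reflexivity|]. rewrite IH. lia. Qed.

Lemma length_grow core k : (1 <= k)%nat -> core 1%nat = [] ->
  (forall N, length (core (S (S N))) = stem_coef N (k - 1)) ->
  forall n, length (grow core n) = fiber_count n k.
Proof.
  intros Hk H1 Hcore n. induction n as [|[|N] IH]; [reflexivity| |].
  - simpl. rewrite H1. destruct k; [lia | reflexivity].
  - change (grow core (S (S N))) with (core (S (S N)) ++ graft_leaf (grow core (S N))).
    rewrite length_app, length_graft_leaf, IH, Hcore.
    destruct k as [|k]; [lia|]. simpl. rewrite Nat.sub_0_r. lia.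
Qed.

Lemma INR_list_sum_map {A : Type} (f : A -> nat) (l : list A) :
  INR (list_sum (map f l)) = sumR l (fun x => INR (f x)).
Proof.
  induction l as [|x l IH]; simpl; [reflexivity|]. rewrite plus_INR, IH. reflexivity.
Qed.

Lemma length_flat_map_map {A B C : Type} (f : A -> B -> C) (l : list A) (L : list B) :
  length (flat_map (fun a => map (f a) L) l) = (length l * length L)%nat.
Proof. induction l as [|a l IH]; simpl; [reflexivity|]. now rewrite length_app, length_map, IH. Qed.

Lemma INR_length_node_joins E1 E2 N :
  INR (length (node_joins E1 E2 (S (S N)))) =
  sumR (seq 0 (S N)) (fun j => INR (length (E1 (S j))) * INR (length (E2 (S (N - j))))).
Proof.
  unfold node_joins. replace (S (S N) - 1)%nat with (S N) by lia.
  rewrite <- seq_shift, length_flat_map, map_map, INR_list_sum_map.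
  apply sumR_ext_in. intros j Hj. apply in_seq in Hj.
  rewrite length_flat_map_map, mult_INR. do 4 f_equal. lia.
Qed.

Lemma length_fiber s n : length (fiber s n) = fiber_count n (2 * leaves s - 1).
Proof.
  revert n; induction s as [|s1 IH1 s2 IH2]; apply length_grow; try reflexivity.
  - intros N. unfold cherry_core. rewrite stem_coef_0. now destruct N.
  - pose proof (leaves_pos s1); simpl; lia.
  - intros N. cbn [fiber]. apply INR_eq. rewrite INR_length_node_joins.
    pose proof (leaves_pos s1); pose proof (leaves_pos s2).
    replace (2 * leaves (Node s1 s2) - 1 - 1)%nat
      with ((2 * leaves s1 - 1) + (2 * leaves s2 - 1))%nat by (simpl; lia).
    rewrite <- stem_coef_conv. apply sumR_ext_in. intros j _. now rewrite IH1, IH2.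
Qed.

Lemma leaves_prune_le t : (leaves (prune t) <= leaves t)%nat.
Proof.
  induction t as [|a IHa b IHb]; simpl; [lia|].
  destruct a as [|a1 a2], b as [|b1 b2]; simpl in *; lia.
Qed.

Lemma Omega_perm_fibers n : (2 <= n)%nat ->
  Permutation (Omega n) (flat_map (fun m => flat_map (fun s => fiber s n) (Omega m)) (seq 1 n)).
Proof.
  intros Hn. apply NoDup_Permutation; [apply Omega_nodup | |].
  - apply NoDup_flat_map; [apply seq_NoDup | |].
    + intros m _. apply NoDup_flat_map; [apply Omega_nodup | intros; apply fiber_nodup |].
      intros s s' z _ _ H H'. apply In_fiber in H as [_ [_ <-]], H' as [_ [_ <-]]. reflexivity.
    + intros m m' z _ _ H H'.
      apply in_flat_map in H as [s [Hs H]], H' as [s' [Hs' H']].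
      apply In_fiber in H as [_ [_ <-]], H' as [_ [_ E]].
      apply In_Omega in Hs, Hs'. congruence.
  - intros t. rewrite In_Omega, in_flat_map. split.
    + intros Hl. exists (leaves (prune t)).
      pose proof (leaves_prune_le t); pose proof (leaves_pos (prune t)).
      split; [apply in_seq; lia|]. apply in_flat_map. exists (prune t).
      split; [now apply In_Omega|]. apply In_fiber.
      repeat split; auto. intros ->. simpl in Hl. lia.
    + intros [m [_ H]]. apply in_flat_map in H as [s [_ H]].
      apply In_fiber in H as [_ [H _]]. exact H.
Qed.

Lemma sumR_Omega_prune n (g : tree -> R) : (2 <= n)%nat ->
  sumR (Omega n) (fun t => g (prune t)) =
  sumR (seq 1 n) (fun m => INR (fiber_count n (2 * m - 1)) * sumR (Omega m) g).
Proof.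
  intros Hn. rewrite (sumR_perm _ _ _ (Omega_perm_fibers n Hn)), sumR_flat_map.
  apply sumR_ext_in. intros m _. rewrite sumR_flat_map, <- sumR_scal.
  apply sumR_ext_in. intros s Hs. apply In_Omega in Hs.
  rewrite (sumR_ext_in _ _ (fun _ => g s)).
  - now rewrite sumR_const, length_fiber, Hs.
  - intros t Ht. now apply In_fiber in Ht as [_ [_ ->]].
Qed.

(** * Growth of the fiber sizes *)

Lemma exp_le_compat x y : x <= y -> exp x <= exp y.
Proof. intros [H|E]; [left; now apply exp_increasing | rewrite E; lra]. Qed.

Lemma ln_le_compat x y : 0 < x -> x <= y -> ln x <= ln y.
Proof. intros Hx [H|E]; [left; now apply ln_increasing | rewrite E; lra]. Qed.

(* [even_part] only serves to close the recursion satisfied by [odd_part], the part that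
   counts fibers (see [fiber_poly_odd_part]). *)
Definition odd_part (y : R) (N : nat) : R :=
  sumR (seq 0 (S N)) (fun m => INR (stem_coef N (2 * m + 1)) * y ^ (2 * m + 1)).

Definition even_part (y : R) (N : nat) : R :=
  sumR (seq 0 (S N)) (fun m => INR (stem_coef N (2 * m)) * y ^ (2 * m)).

Lemma odd_part_nonneg y N : 0 < y -> 0 <= odd_part y N.
Proof.
  intros Hy. apply sumR_nonneg. intros m _.
  apply Rmult_le_pos; [apply pos_INR | apply pow_le; lra].
Qed.

Lemma even_part_nonneg y N : 0 < y -> 0 <= even_part y N.
Proof.
  intros Hy. apply sumR_nonneg. intros m _.
  apply Rmult_le_pos; [apply pos_INR | apply pow_le; lra].
Qed.

Lemma INR_stem_coef_S N k :
  INR (stem_coef (S N) (S k)) = INR (stem_coef N k) + 2 * INR (stem_coef N (S k)).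
Proof. cbn [stem_coef]. rewrite plus_INR, mult_INR. reflexivity. Qed.

Lemma odd_part_S y N : odd_part y (S N) = y * even_part y N + 2 * odd_part y N.
Proof.
  unfold odd_part, even_part. rewrite sumR_seq_last, stem_coef_gt, INR_0 by lia.
  rewrite Rmult_0_l, Rplus_0_r, <- !sumR_scal, <- sumR_plus.
  apply sumR_ext_in. intros m _.
  replace (2 * m + 1)%nat with (S (2 * m)) by lia. rewrite INR_stem_coef_S. simpl pow. ring.
Qed.

Lemma even_part_S y N : (1 <= N)%nat ->
  even_part y (S N) = y * odd_part y N + 2 * even_part y N.
Proof.
  intros HN. unfold odd_part, even_part.
  set (ev m := INR (stem_coef N (2 * m)) * y ^ (2 * m)).
  assert (Hshift : sumR (seq 0 (S N)) (fun m => ev (S m)) = sumR (seq 0 (S N)) ev).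
  { pose proof (sumR_seq_first (S N) ev) as Efirst.
    pose proof (sumR_seq_last (S N) ev) as Elast.
    assert (ev 0%nat = 0) as E0.
    { unfold ev. rewrite stem_coef_0. destruct N; [lia|]. simpl. ring. }
    assert (ev (S N) = 0) as EN.
    { unfold ev. rewrite stem_coef_gt by lia. simpl. ring. }
    lra. }
  rewrite sumR_seq_first, <- Hshift. unfold ev.
  replace (stem_coef (S N) (2 * 0)) with 0%nat by reflexivity.
  rewrite INR_0, Rmult_0_l, Rplus_0_l, <- !sumR_scal, <- sumR_plus.
  apply sumR_ext_in. intros m _.
  replace (2 * S m)%nat with (S (2 * m + 1)) by lia. rewrite INR_stem_coef_S. simpl pow. ring.
Qed.

Lemma odd_plus_even_part y N : (1 <= N)%nat ->
  odd_part y N + even_part y N = y * (2 + y) ^ (N - 1).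
Proof.
  induction N as [|[|N] IH]; intros HN; [lia | unfold odd_part, even_part, sumR; simpl; ring |].
  rewrite (odd_part_S y (S N)), (even_part_S y (S N)) by lia.
  replace (S (S N) - 1)%nat with (S (S N - 1)) by lia. rewrite <- tech_pow_Rmult.
  transitivity ((2 + y) * (y * (2 + y) ^ (S N - 1))); [rewrite <- IH by lia |]; ring.
Qed.

Lemma odd_part_le y N : 0 < y -> (1 <= N)%nat -> odd_part y N <= y * (2 + y) ^ (N - 1).
Proof.
  intros Hy HN. rewrite <- odd_plus_even_part by auto. pose proof (even_part_nonneg y N Hy). lra.
Qed.

Lemma odd_part_S_ge y N : 0 < y -> (1 <= N)%nat ->
  Rmin y 2 * (y * (2 + y) ^ (N - 1)) <= odd_part y (S N).
Proof.
  intros Hy HN. rewrite <- odd_plus_even_part, odd_part_S by auto.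
  pose proof (odd_part_nonneg y N Hy); pose proof (even_part_nonneg y N Hy).
  unfold Rmin. destruct (Rle_dec y 2); nra.
Qed.

Definition fiber_poly (n : nat) (h : R) : R :=
  sumR (seq 1 n) (fun m => INR (fiber_count n (2 * m - 1)) * exp (INR m * h)).

Lemma exp_INR_mult_half k h : exp (INR k * h) = exp (h / 2) ^ (2 * k).
Proof.
  rewrite pow_mult. replace (exp (h / 2) ^ 2) with (exp h)
    by (simpl; rewrite Rmult_1_r, <- exp_plus; f_equal; field).
  induction k as [|k IH]; [simpl; now rewrite Rmult_0_l, exp_0|].
  rewrite S_INR, Rmult_plus_distr_r, Rmult_1_l, exp_plus, IH. simpl. ring.
Qed.

Lemma fiber_poly_odd_part n h : (1 <= n)%nat ->
  fiber_poly n h = exp (h / 2) * odd_part (exp (h / 2)) (n - 1).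
Proof.
  intros Hn. unfold fiber_poly, odd_part. destruct n as [|N]; [lia|].
  replace (S N - 1)%nat with N by lia.
  rewrite <- seq_shift, sumR_map, <- sumR_scal. apply sumR_ext_in. intros m _.
  unfold fiber_count. replace (2 * S m - 1)%nat with (2 * m + 1)%nat by lia.
  rewrite exp_INR_mult_half. replace (2 * S m)%nat with (S (2 * m + 1)) by lia. simpl pow. ring.
Qed.

Definition rate_step (g : R) : R := ln (2 + exp (g / 2)).

Lemma exp_INR_rate_step n g : exp (INR n * rate_step g) = (2 + exp (g / 2)) ^ n.
Proof.
  unfold rate_step. rewrite <- Rpower_pow by (pose proof (exp_pos (g / 2)); lra).
  unfold Rpower. now rewrite Rmult_comm.
Qed.

Lemma fiber_poly_bounds h : exists k K, 0 < k /\ 0 < K /\ forall n, (3 <= n)%nat ->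
  k * exp (INR n * rate_step h) <= fiber_poly n h <= K * exp (INR n * rate_step h).
Proof.
  set (y := exp (h / 2)). assert (Hy : 0 < y) by apply exp_pos.
  assert (Hm : 0 < Rmin y 2) by (apply Rmin_glb_lt; lra).
  assert (Hz : forall j, 0 < (2 + y) ^ j) by (intros; apply pow_lt; lra).
  exists (y * (Rmin y 2 * y) / (2 + y) ^ 3), (y * y / (2 + y) ^ 2).
  split; [|split]; [apply Rdiv_lt_0_compat; auto; repeat apply Rmult_lt_0_compat; auto ..|].
  intros n Hn. rewrite exp_INR_rate_step, fiber_poly_odd_part by lia. fold y.
  split.
  - replace (n - 1)%nat with (S (n - 2)) by lia.
    pose proof (odd_part_S_ge y (n - 2) Hy ltac:(lia)) as Hlow.
    replace n with (3 + (n - 3))%nat at 1 by lia. rewrite pow_add.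
    replace (n - 2 - 1)%nat with (n - 3)%nat in Hlow by lia.
    apply Rle_trans with (y * (Rmin y 2 * (y * (2 + y) ^ (n - 3)))).
    + right. field. specialize (Hz 3%nat). lra.
    + apply Rmult_le_compat_l; lra.
  - pose proof (odd_part_le y (n - 1) Hy ltac:(lia)) as Hup.
    replace n with (2 + (n - 2))%nat at 2 by lia. rewrite pow_add.
    replace (n - 1 - 1)%nat with (n - 2)%nat in Hup by lia.
    apply Rle_trans with (y * (y * (2 + y) ^ (n - 2))).
    + apply Rmult_le_compat_l; lra.
    + right. field. specialize (Hz 2%nat). lra.
Qed.

Lemma rate_step_le g e : 0 <= e -> rate_step (g + e) <= rate_step g + e / 2.
Proof.
  intros He. unfold rate_step. pose proof (exp_pos (g / 2)); pose proof (exp_pos (e / 2)).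
  rewrite <- (ln_exp (e / 2)). rewrite <- ln_mult by lra.
  apply ln_le_compat; [pose proof (exp_pos ((g + e) / 2)); lra|].
  replace ((g + e) / 2) with (g / 2 + e / 2) by field. rewrite exp_plus.
  assert (1 <= exp (e / 2)) by (rewrite <- exp_0; apply exp_le_compat; lra). nra.
Qed.

Lemma rate_step_mono g g' : g <= g' -> rate_step g <= rate_step g'.
Proof.
  intros Hg. unfold rate_step. apply ln_le_compat; [pose proof (exp_pos (g / 2)); lra|].
  assert (exp (g / 2) <= exp (g' / 2)) by (apply exp_le_compat; lra). lra.
Qed.

Lemma rate_step_ln4 : rate_step (ln 4) = ln 4.
Proof.
  unfold rate_step. replace (ln 4 / 2) with (ln 2).
  - rewrite exp_ln by lra. f_equal. lra.
  - replace 4 with (2 * 2) by lra. rewrite ln_mult by lra. field.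
Qed.

Lemma rate_step_shift x : rate_step (x + ln 4) = phi x + ln 4.
Proof.
  unfold rate_step, phi, cosh.
  assert (E : ln 4 = ln 2 + ln 2) by (rewrite <- ln_mult by lra; f_equal; lra).
  replace ((x + ln 4) / 2) with (x / 2 + ln 2) by (rewrite E; field).
  rewrite exp_plus, exp_ln by lra. rewrite <- (ln_exp (x / 4)) at 1.
  pose proof (exp_pos (x / 4)); pose proof (exp_pos (- (x / 4))); pose proof (exp_pos (x / 2)).
  rewrite <- !ln_mult by (try apply Rmult_lt_0_compat; lra). f_equal.
  assert (exp (x / 4) * exp (x / 4) = exp (x / 2)) by (rewrite <- exp_plus; f_equal; field).
  assert (exp (x / 4) * exp (- (x / 4)) = 1) by (rewrite <- exp_plus, <- exp_0; f_equal; ring).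
  nra.
Qed.

Lemma iter_rate_step_shift r x : Nat.iter r rate_step (x + ln 4) = Nat.iter r phi x + ln 4.
Proof. induction r as [|r IH]; simpl; [reflexivity|]. now rewrite IH, rate_step_shift. Qed.

Lemma ln4_pos : 0 < ln 4.
Proof. rewrite <- ln_1. apply ln_increasing; lra. Qed.

(* [rate_step] is a contraction of ratio 1/2 with fixed point [ln 4]. *)
Lemma iter_rate_step_0 k : ln 4 - ln 4 * (/ 2) ^ k <= Nat.iter k rate_step 0 <= ln 4.
Proof.
  induction k as [|k IH]; [simpl; pose proof ln4_pos; lra|].
  simpl Nat.iter. set (g := Nat.iter k rate_step 0) in *.
  pose proof (rate_step_mono g (ln 4) ltac:(lra)).
  pose proof (rate_step_le g (ln 4 - g) ltac:(lra)).
  replace (g + (ln 4 - g)) with (ln 4) in * by ring. rewrite rate_step_ln4 in *.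
  simpl pow. lra.
Qed.

(** * Exponential growth rates *)

Definition exp_rate_le (a : nat -> R) (l : R) : Prop :=
  forall e, 0 < e -> exists C, 0 < C /\
    forall n, (1 <= n)%nat -> a n <= C * exp (INR n * (l + e)).

Definition exp_rate_ge (a : nat -> R) (l : R) : Prop :=
  forall e, 0 < e -> exists c, 0 < c /\
    forall n, (1 <= n)%nat -> c * exp (INR n * (l - e)) <= a n.

Lemma lower_bound_from (a w : nat -> R) k :
  (forall n, (1 <= n)%nat -> 0 < a n) -> (forall n, 0 < w n) ->
  (exists c, 0 < c /\ forall n, (S k <= n)%nat -> c * w n <= a n) ->
  exists c, 0 < c /\ forall n, (1 <= n)%nat -> c * w n <= a n.
Proof.
  intros Ha Hw. induction k as [|k IH]; intros [c [Hc Hb]]; [now exists c|].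
  apply IH. exists (Rmin c (a (S k) / w (S k))).
  assert (Hk : 0 < a (S k) / w (S k)) by (apply Rdiv_lt_0_compat; auto; apply Ha; lia).
  split; [now apply Rmin_glb_lt|]. intros n Hn.
  destruct (Nat.eq_dec n (S k)) as [->|Hne].
  - apply Rle_trans with (a (S k) / w (S k) * w (S k)).
    + apply Rmult_le_compat_r; [left; auto | apply Rmin_r].
    + right. field. apply Rgt_not_eq, Hw.
  - apply Rle_trans with (c * w n); [|apply Hb; lia].
    apply Rmult_le_compat_r; [left; auto | apply Rmin_l].
Qed.

Lemma upper_bound_from (a w : nat -> R) k :
  (forall n, 0 < w n) ->
  (exists C, 0 < C /\ forall n, (S k <= n)%nat -> a n <= C * w n) ->
  exists C, 0 < C /\ forall n, (1 <= n)%nat -> a n <= C * w n.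
Proof.
  intros Hw. induction k as [|k IH]; intros [C [HC Hb]]; [now exists C|].
  apply IH. exists (Rmax C (a (S k) / w (S k))).
  split; [apply Rlt_le_trans with C; [auto | apply Rmax_l]|]. intros n Hn.
  destruct (Nat.eq_dec n (S k)) as [->|Hne].
  - apply Rle_trans with (a (S k) / w (S k) * w (S k)).
    + right. field. apply Rgt_not_eq, Hw.
    + apply Rmult_le_compat_r; [left; auto | apply Rmax_r].
  - apply Rle_trans with (C * w n); [apply Hb; lia|].
    apply Rmult_le_compat_r; [left; auto | apply Rmax_l].
Qed.

Definition fiber_transform (a b : nat -> R) : Prop :=
  forall n, (3 <= n)%nat -> b n = sumR (seq 1 n) (fun m => INR (fiber_count n (2 * m - 1)) * a m).

Lemma exp_rate_le_transform a b g :
  fiber_transform a b -> exp_rate_le a g -> exp_rate_le b (rate_step g).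
Proof.
  intros Hab Ha e He. destruct (Ha e He) as [C [HC Hbound]].
  destruct (fiber_poly_bounds (g + e)) as [k [K [Hk [HK HP]]]].
  apply (upper_bound_from b (fun n => exp (INR n * (rate_step g + e))) 2); [intros; apply exp_pos|].
  exists (C * K). split; [now apply Rmult_lt_0_compat|]. intros n Hn. rewrite Hab by lia.
  apply Rle_trans with (C * fiber_poly n (g + e)).
  - unfold fiber_poly. rewrite <- sumR_scal. apply sumR_le. intros m Hm. apply in_seq in Hm.
    rewrite <- Rmult_assoc, (Rmult_comm C), Rmult_assoc.
    apply Rmult_le_compat_l; [apply pos_INR|]. apply Hbound; lia.
  - rewrite Rmult_assoc. apply Rmult_le_compat_l; [lra|].
    apply Rle_trans with (K * exp (INR n * rate_step (g + e))); [apply HP; lia|].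
    apply Rmult_le_compat_l; [lra|]. apply exp_le_compat, Rmult_le_compat_l; [apply pos_INR|].
    pose proof (rate_step_le g e ltac:(lra)). lra.
Qed.

Lemma exp_rate_ge_transform a b g :
  fiber_transform a b -> (forall n, (1 <= n)%nat -> 0 < b n) ->
  exp_rate_ge a g -> exp_rate_ge b (rate_step g).
Proof.
  intros Hab Hpos Ha e He. destruct (Ha e He) as [c [Hc Hbound]].
  destruct (fiber_poly_bounds (g - e)) as [k [K [Hk [HK HP]]]].
  apply (lower_bound_from b (fun n => exp (INR n * (rate_step g - e))) 2); auto;
    [intros; apply exp_pos|].
  exists (c * k). split; [now apply Rmult_lt_0_compat|]. intros n Hn. rewrite Hab by lia.
  apply Rle_trans with (c * fiber_poly n (g - e)).
  - rewrite Rmult_assoc. apply Rmult_le_compat_l; [lra|].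
    apply Rle_trans with (k * exp (INR n * rate_step (g - e))); [|apply HP; lia].
    apply Rmult_le_compat_l; [lra|]. apply exp_le_compat, Rmult_le_compat_l; [apply pos_INR|].
    pose proof (rate_step_le (g - e) e ltac:(lra)). replace (g - e + e) with g in * by ring. lra.
  - unfold fiber_poly. rewrite <- sumR_scal. apply sumR_le. intros m Hm. apply in_seq in Hm.
    rewrite <- Rmult_assoc, (Rmult_comm c), Rmult_assoc.
    apply Rmult_le_compat_l; [apply pos_INR|]. apply Hbound; lia.
Qed.

Lemma exp_rate_ge_approx a l :
  (forall e, 0 < e -> exists l', l - e <= l' /\ exp_rate_ge a l') -> exp_rate_ge a l.
Proof.
  intros H e He. destruct (H (e / 2) ltac:(lra)) as [l' [Hl' Ha]].
  destruct (Ha (e / 2) ltac:(lra)) as [c [Hc Hb]]. exists c. split; [exact Hc|].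
  intros n Hn. eapply Rle_trans; [|apply Hb; exact Hn]. apply Rmult_le_compat_l; [lra|].
  apply exp_le_compat, Rmult_le_compat_l; [apply pos_INR | lra].
Qed.

Lemma exp_rate_le_scale a b l x : (forall n, b n = a n * exp (INR n * x)) ->
  exp_rate_le a l -> exp_rate_le b (l + x).
Proof.
  intros Hb Ha e He. destruct (Ha e He) as [C [HC H]]. exists C. split; [exact HC|].
  intros n Hn. rewrite Hb.
  replace (INR n * (l + x + e)) with (INR n * (l + e) + INR n * x) by ring.
  rewrite exp_plus, <- Rmult_assoc.
  apply Rmult_le_compat_r; [left; apply exp_pos | now apply H].
Qed.

Lemma exp_rate_ge_scale a b l x : (forall n, b n = a n * exp (INR n * x)) ->
  exp_rate_ge a l -> exp_rate_ge b (l + x).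
Proof.
  intros Hb Ha e He. destruct (Ha e He) as [c [Hc H]]. exists c. split; [exact Hc|].
  intros n Hn. rewrite Hb.
  replace (INR n * (l + x - e)) with (INR n * (l - e) + INR n * x) by ring.
  rewrite exp_plus, <- Rmult_assoc.
  apply Rmult_le_compat_r; [left; apply exp_pos | now apply H].
Qed.

Lemma Un_cv_ext_from (u v : nat -> R) (l : R) (N : nat) :
  (forall n, (N <= n)%nat -> u n = v n) -> Un_cv u l -> Un_cv v l.
Proof.
  intros Huv Hu eps Heps. destruct (Hu eps Heps) as [M HM].
  exists (Nat.max N M). intros n Hn. rewrite <- Huv by lia. apply HM. lia.
Qed.

Lemma Un_cv_inv_INR_mult x : Un_cv (fun n => / INR n * x) 0.
Proof.
  intros eps Heps.
  assert (Hx : 0 <= Rabs x) by apply Rabs_pos.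
  destruct (archimed_cor1 (eps / (Rabs x + 1))) as [N [HN HN0]];
    [apply Rdiv_lt_0_compat; lra|].
  exists N. intros n Hn. unfold R_dist. rewrite Rminus_0_r, Rabs_mult, Rabs_inv, Rabs_pos_eq
    by (apply pos_INR || (apply not_0_INR; lia)).
  assert (/ INR n <= / INR N) by (apply Rinv_le_contravar; [apply lt_0_INR | apply le_INR]; lia).
  assert (0 < / INR n) by (apply Rinv_0_lt_compat, lt_0_INR; lia).
  assert (eps / (Rabs x + 1) * (Rabs x + 1) = eps) by (field; lra).
  nra.
Qed.

Lemma ln_le_mult_exp z C x : 0 < z -> 0 < C -> z <= C * exp x -> ln z <= ln C + x.
Proof.
  intros Hz HC H. rewrite <- (ln_exp x). rewrite <- ln_mult by (auto using exp_pos).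
  now apply ln_le_compat.
Qed.

Lemma ln_ge_mult_exp z c x : 0 < c -> c * exp x <= z -> ln c + x <= ln z.
Proof.
  intros Hc H. rewrite <- (ln_exp x). rewrite <- ln_mult by (auto using exp_pos).
  apply ln_le_compat; [apply Rmult_lt_0_compat; auto using exp_pos | exact H].
Qed.

Lemma exp_rate_Un_cv a l : (forall n, (1 <= n)%nat -> 0 < a n) ->
  exp_rate_le a l -> exp_rate_ge a l -> Un_cv (fun n => / INR n * ln (a n)) l.
Proof.
  intros Hpos Hle Hge eps Heps.
  destruct (Hle (eps / 2) ltac:(lra)) as [C [HC HbC]].
  destruct (Hge (eps / 2) ltac:(lra)) as [c [Hc Hbc]].
  destruct (Un_cv_inv_INR_mult (ln C) (eps / 2) ltac:(lra)) as [N1 HN1].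
  destruct (Un_cv_inv_INR_mult (ln c) (eps / 2) ltac:(lra)) as [N2 HN2].
  exists (Nat.max 1 (Nat.max N1 N2)). intros n Hn.
  specialize (HN1 n ltac:(lia)). specialize (HN2 n ltac:(lia)).
  unfold R_dist in *. rewrite Rminus_0_r in HN1, HN2.
  apply Rabs_def2 in HN1, HN2.
  assert (Hinv : / INR n * INR n = 1) by (field; apply not_0_INR; lia).
  assert (0 < / INR n) by (apply Rinv_0_lt_compat, lt_0_INR; lia).
  pose proof (ln_le_mult_exp _ _ _ (Hpos n ltac:(lia)) HC (HbC n ltac:(lia))) as Hup.
  pose proof (ln_ge_mult_exp _ _ _ Hc (Hbc n ltac:(lia))) as Hlow.
  apply Rmult_le_compat_l with (r := / INR n) in Hup, Hlow; try lra.
  rewrite Rmult_plus_distr_l, <- Rmult_assoc, Hinv in Hup, Hlow.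
  apply Rabs_def1; lra.
Qed.

Definition num_trees (n : nat) : R := INR (length (Omega n)).

Lemma num_trees_ge_1 n : (1 <= n)%nat -> 1 <= num_trees n.
Proof.
  intros Hn. unfold num_trees. destruct (Omega n) eqn:E; [now apply Omega_nonempty in E|].
  simpl length. rewrite S_INR. pose proof (pos_INR (length l)). lra.
Qed.

Lemma num_trees_pos n : (1 <= n)%nat -> 0 < num_trees n.
Proof. intros Hn. pose proof (num_trees_ge_1 n Hn). lra. Qed.

Lemma num_trees_transform : fiber_transform num_trees num_trees.
Proof.
  intros n Hn. unfold num_trees.
  rewrite <- (Rmult_1_r (INR _)), <- sumR_const.
  rewrite (sumR_Omega_prune n (fun _ => 1)) by lia. apply sumR_ext_in. intros m _.
  now rewrite sumR_const, Rmult_1_r.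
Qed.

Lemma num_trees_rate_le : exp_rate_le num_trees (ln 4).
Proof.
  intros e He. exists 1. split; [lra|]. intros n Hn. rewrite Rmult_1_l.
  apply Rle_trans with (exp (INR n * ln 4)).
  - change (exp (INR n * ln 4)) with (Rpower 4 (INR n)). rewrite Rpower_pow by lra.
    unfold num_trees. replace 4 with (INR 4) by (simpl; lra). rewrite <- pow_INR.
    apply le_INR, length_Omega_le.
  - apply exp_le_compat, Rmult_le_compat_l; [apply pos_INR | lra].
Qed.

Lemma num_trees_rate_ge : exp_rate_ge num_trees (ln 4).
Proof.
  assert (Hiter : forall k, exp_rate_ge num_trees (Nat.iter k rate_step 0)).
  { induction k as [|k IH]; simpl.
    - intros e He. exists 1. split; [lra|]. intros n Hn. rewrite Rmult_1_l.
      apply Rle_trans with 1; [|now apply num_trees_ge_1].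
      rewrite <- exp_0. apply exp_le_compat. pose proof (pos_INR n). nra.
    - apply (exp_rate_ge_transform num_trees); auto using num_trees_transform, num_trees_pos. }
  apply exp_rate_ge_approx. intros e He.
  destruct (pow_lt_1_zero (/ 2) ltac:(rewrite Rabs_pos_eq; lra) (e / ln 4)) as [k Hk].
  { apply Rdiv_lt_0_compat; [lra | apply ln4_pos]. }
  specialize (Hk k (le_n k)). rewrite Rabs_pos_eq in Hk by (apply pow_le; lra).
  exists (Nat.iter k rate_step 0). split; [|apply Hiter].
  pose proof (iter_rate_step_0 k). pose proof ln4_pos.
  apply Rmult_lt_compat_l with (r := ln 4) in Hk; [|lra].
  replace (ln 4 * (e / ln 4)) with e in Hk by (field; lra). lra.
Qed.

Definition branch_mgf (xi : R) (k n : nat) : R :=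
  sumR (Omega n) (fun t => exp (xi * INR (branches (S k) t))).

Lemma expect_exp_branch_mgf xi k n : expect_exp xi (S k) n = branch_mgf xi k n / num_trees n.
Proof. reflexivity. Qed.

Lemma branch_mgf_pos xi k n : (1 <= n)%nat -> 0 < branch_mgf xi k n.
Proof. intros Hn. apply sumR_pos; [now apply Omega_nonempty | intros; apply exp_pos]. Qed.

Lemma branch_mgf_transform xi k : fiber_transform (branch_mgf xi k) (branch_mgf xi (S k)).
Proof.
  intros n Hn. unfold branch_mgf at 1.
  rewrite (sumR_ext_in _ _ (fun t => exp (xi * INR (branches (S k) (prune t))))).
  - apply (sumR_Omega_prune n (fun s => exp (xi * INR (branches (S k) s)))). lia.
  - intros t Ht. apply In_Omega in Ht. rewrite branches_prune; [reflexivity | lia |].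
    intros ->. simpl in Ht. lia.
Qed.

Lemma branch_mgf_0 xi n : branch_mgf xi 0 n = num_trees n * exp (INR n * xi).
Proof.
  unfold branch_mgf, num_trees. rewrite <- sumR_const. apply sumR_ext_in.
  intros t Ht. apply In_Omega in Ht. now rewrite branches_1, Ht, Rmult_comm.
Qed.

Lemma branch_mgf_rates xi k :
  exp_rate_le (branch_mgf xi k) (Nat.iter k rate_step (xi + ln 4)) /\
  exp_rate_ge (branch_mgf xi k) (Nat.iter k rate_step (xi + ln 4)).
Proof.
  induction k as [|k [IHle IHge]]; simpl Nat.iter.
  - rewrite (Rplus_comm xi).
    split; [apply (exp_rate_le_scale num_trees) | apply (exp_rate_ge_scale num_trees)];
      auto using branch_mgf_0, num_trees_rate_le, num_trees_rate_ge.
  - split; [apply (exp_rate_le_transform (branch_mgf xi k))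
           | apply (exp_rate_ge_transform (branch_mgf xi k))];
      auto using branch_mgf_transform, branch_mgf_pos.
Qed.

Theorem lemma2p1 (r : nat) (xi : R) (hr : (1 <= r)%nat) :
  Un_cv (fun n : nat => / INR n * ln (expect_exp xi (S r) n))
        (Nat.iter r phi xi).
Proof.
  destruct (branch_mgf_rates xi r) as [Hle Hge].
  rewrite iter_rate_step_shift in Hle, Hge.
  pose proof (exp_rate_Un_cv _ _ (branch_mgf_pos xi r) Hle Hge) as Hmgf.
  pose proof (exp_rate_Un_cv _ _ num_trees_pos num_trees_rate_le num_trees_rate_ge) as Htrees.
  replace (Nat.iter r phi xi) with (Nat.iter r phi xi + ln 4 - ln 4) by ring.
  eapply (Un_cv_ext_from _ _ _ 1%nat); [|exact (CV_minus _ _ _ _ Hmgf Htrees)].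
  intros n Hn. cbv beta.
  rewrite expect_exp_branch_mgf. unfold Rdiv. rewrite ln_mult, ln_Rinv by
    (auto using branch_mgf_pos, num_trees_pos, Rinv_0_lt_compat).
  ring.
Qed.
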